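(* Suppose that $G$ is a closed graph on a compact metrizable space $X$. If $X$ can be written as a countable union of $G$-loose sets, then the poset $P_G$ is c.c.c. and adds no dominating real.
   Context: A graph $G$ on $X$ is a symmetric irreflexive relation, closed if closed in $(X\times X)\setminus$ diagonal. A set $A\subset X$ is $G$-loose if every $x\in X$ has an open neighborhood containing no elements of $A$ that are $G$-connected to $x$. A $G$-anticlique is a set with no two distinct $G$-connected points. $P_G$ is the poset of pairs $p=\langle a_p,o_p\rangle$ with $a_p\subset X$ a finite $G$-anticlique and $o_p\supset a_p$ open, ordered by $q\leq p$ iff $a_p\subset a_q$ and $o_q\subset o_p$. *)

From HB Require Import structures.
From mathcomp Require Import all_boot.
From mathcomp Require Import boolp classical_sets cardinality topology.
From Stdlib Require Import Rdefinitions.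

Set Implicit Arguments.
Unset Strict Implicit.
Unset Printing Implicit Defensive.

Local Open Scope classical_set_scope.

Definition metrizable (X : topologicalType) : Prop :=
  exists d : X -> X -> R,
    (forall x y, Rle R0 (d x y)) /\
    (forall x y, d x y = R0 <-> x = y) /\
    (forall x y, d x y = d y x) /\
    (forall x y z, Rle (d x z) (Rplus (d x y) (d y z))) /\
    (forall A : set X,
        open A <-> (forall x, A x -> exists e, Rlt R0 e /\
                     (forall y, Rlt (d x y) e -> A y))).

Definition is_graph (X : Type) (G : X -> X -> Prop) : Prop :=
  (forall x y, G x y -> G y x) /\ (forall x, ~ G x x).

(* G is closed: its edge set is closed in (X x X) minus the diagonal, i.e. it
   is the trace on the off-diagonal of a closed subset of X x X. *)
Definition closed_graph (X : topologicalType) (G : X -> X -> Prop) : Prop :=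
  is_graph G /\
  exists C : set (X * X), closed C /\
    [set p | G p.1 p.2] = C `&` [set p | p.1 <> p.2].

Definition loose (X : topologicalType) (G : X -> X -> Prop) (A : set X) : Prop :=
  forall x : X, exists U : set X, open U /\ U x /\
    (forall a, U a -> A a -> ~ G x a).

Definition anticlique (X : Type) (G : X -> X -> Prop) (A : set X) : Prop :=
  forall x y, A x -> A y -> x <> y -> ~ G x y.

Record PG_cond (X : topologicalType) (G : X -> X -> Prop) := PGCond {
  a_ : set X;
  o_ : set X;
  a_finite : finite_set a_;
  a_anticlique : anticlique G a_;
  o_open : open o_;
  a_sub_o : a_ `<=` o_ }.

Definition PG_le (X : topologicalType) (G : X -> X -> Prop)
    (q p : PG_cond G) : Prop :=
  a_ p `<=` a_ q /\ o_ q `<=` o_ p.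

Definition compatible (P : Type) (le : P -> P -> Prop) (p q : P) : Prop :=
  exists r, le r p /\ le r q.

Definition antichain (P : Type) (le : P -> P -> Prop) (A : set P) : Prop :=
  forall p q, A p -> A q -> p <> q -> ~ compatible le p q.

Definition ccc (P : Type) (le : P -> P -> Prop) : Prop :=
  forall A : set P, antichain le A -> countable A.

Definition dense_below (P : Type) (le : P -> P -> Prop) (D : set P) (p : P) : Prop :=
  forall q, le q p -> exists r, le r q /\ D r.

(* A P-name for an element of omega^omega, given by its "forcing values":
   nm n k is the (open) set of conditions forcing  f(n) = k. *)
Definition real_name (P : Type) (le : P -> P -> Prop)
    (nm : nat -> nat -> set P) : Prop :=
  (forall n k p q, nm n k p -> le q p -> nm n k q) /\
  (forall n k k' r, k <> k' -> nm n k r -> nm n k' r -> False) /\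
  (forall n p, dense_below le (\bigcup_k nm n k) p).

(* r forces  g(n) <= f(n)  (g a ground-model real): the conditions forcing
   some value f(n) = k with k >= g(n) are dense below r. *)
Definition forces_ge (P : Type) (le : P -> P -> Prop)
    (nm : nat -> nat -> set P) (g : nat -> nat) (n : nat) (r : P) : Prop :=
  dense_below le (\bigcup_(k in [set k | (g n <= k)%N]) nm n k) r.

(* p forces  g <=* f  (i.e. exists m, forall n >= m, g(n) <= f(n)). *)
Definition forces_dominates (P : Type) (le : P -> P -> Prop)
    (nm : nat -> nat -> set P) (g : nat -> nat) (p : P) : Prop :=
  dense_below le
    [set q | exists m, forall n, (m <= n)%N -> forces_ge le nm g n q] p.

Definition adds_dominating_real (P : Type) (le : P -> P -> Prop) : Prop :=
  exists nm : nat -> nat -> set P, real_name le nm /\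
  exists p : P, forall g : nat -> nat, forces_dominates le nm g p.

(* The conditions of P_G fall into countably many pieces indexed by finite
   codes: for each point x of a_p a code records a loose set A_n containing x
   and a ball B, taken from fixed finite nets of the compact metric space, with
   x in B, the double of B inside o_p, no point of A_n in the closure of B
   adjacent to x, and no edges between the closures of distinct balls of the
   code.  Conditions with a common code are compatible, so P_G is
   sigma-centred, hence c.c.c.  For a sequence of conditions with a common
   code, the ultrafilter limits of their points together with the union of the
   doubled balls form a condition every extension of which is compatible with
   infinitely many terms: looseness keeps a limit point off the nearby points
   of its own piece, and closedness of G keeps the other points of the
   extension off them.  So below the conditions of code c some value of f(n)
   is decided under a bound K(c, n), and a ground-model real dominating all
   the K(c, -) is not dominated by f. *)

From Stdlib Require Import Rdefinitions RIneq Rbasic_fun Lra.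
From Stdlib Require Rtrigo_def.
From mathcomp Require Import all_boot.
From mathcomp Require Import boolp classical_sets cardinality topology.

Set Implicit Arguments.
Unset Strict Implicit.
Unset Printing Implicit Defensive.
Local Open Scope classical_set_scope.

Section ForcingPieces.
Variables (P : Type) (le : P -> P -> Prop).

Definition centered (D : set P) : Prop :=
  forall p q, D p -> D q -> compatible le p q.

Definition has_limits (D : set P) : Prop :=
  forall qf : nat -> P, (forall k, D (qf k)) ->
  exists q, forall r, le r q -> forall j,
    exists2 k, (j <= k)%N & compatible le r (qf k).

Lemma ccc_of_centered_cover (C : countType) (piece : C -> set P) :
  (forall p, exists c, piece c p) -> (forall c, centered (piece c)) -> ccc le.
Proof.
move=> cover cent A antiA; have [code codeP] := choice cover.
apply/countable_injP; exists (pickle \o code) => p q.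
rewrite !in_setE => Ap Aq /= /(pcan_inj pickleK) same_code.
apply: contrapT => pq; apply: (antiA p q Ap Aq pq).
by apply: cent (codeP p) _; rewrite same_code.
Qed.

Lemma dominate_countable (C : countType) (K : C -> nat -> nat) :
  exists g : nat -> nat, forall c n, (pickle c <= n)%N -> (K c n < g n)%N.
Proof.
exists (fun n => (\max_(i < n.+1) oapp (K^~ n) 0 (unpickle i)).+1) => c n cn.
rewrite ltnS; apply: leq_trans (leq_bigmax (Ordinal (cn : (pickle c < n.+1)%N))).
by rewrite /= pickleK.
Qed.

Hypothesis le_refl : forall p, le p p.

Lemma real_name_value_bounded (D : set P) (nm : nat -> nat -> set P) :
  has_limits D -> real_name le nm -> forall n, exists K, forall q, D q ->
  exists s j, [/\ le s q, (j <= K)%N & nm n j s].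
Proof.
move=> limits [down [_ dense]] n; apply: contrapT => noK.
have /choice[qf qfP] : forall K, exists q, D q /\
    ~ exists s j, [/\ le s q, (j <= K)%N & nm n j s].
  move=> K; apply: contrapT => allK; apply: noK; exists K => q Dq.
  by apply: contrapT => nq; apply: allK; exists q.
have [q qP] := limits qf (fun K => (qfP K).1).
have [r [rq [j _ rj]]] := dense n q q (le_refl q).
have [k jk [s [sr sk]]] := qP r rq j.
by apply: (qfP k).2; exists s, j; split=> //; apply: down rj sr.
Qed.

Lemma no_dominating_real_of_limit_cover (C : countType) (piece : C -> set P) :
  (forall p, exists c, piece c p) -> (forall c, has_limits (piece c)) ->
  ~ adds_dominating_real le.
Proof.
move=> cover limits [nm [nmP [p dom]]].
have /choice[K KP] : forall cn : C * nat, exists K, forall q, piece cn.1 q ->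
    exists s j, [/\ le s q, (j <= K)%N & nm cn.2 j s].
  by move=> [c n]; apply: real_name_value_bounded (limits c) nmP n.
have [g gK] := dominate_countable (fun c n => K (c, n)).
have [q [qp [m qm]]] := dom g p (le_refl p).
have [c qc] := cover q; set n := maxn m (pickle c).
have [s [j [sq jK sj]]] := KP (c, n) q qc.
have [r [rs [k gk rk]]] := qm n (leq_maxl _ _) s sq.
have [down [disj _]] := nmP.
apply: (disj n j k r) (down _ _ _ _ sj rs) rk => jk.
have := leq_ltn_trans jK (gK c n (leq_maxr _ _)).
by rewrite jk ltnNge gk.
Qed.

Lemma ccc_no_dominating_real_of_cover (C : countType) (piece : C -> set P) :
  (forall p, exists c, piece c p) -> (forall c, centered (piece c)) ->
  (forall c, has_limits (piece c)) -> ccc le /\ ~ adds_dominating_real le.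
Proof.
move=> cover cent limits; split; first exact: ccc_of_centered_cover cent.
exact: no_dominating_real_of_limit_cover limits.
Qed.

End ForcingPieces.

Lemma ccc_no_dominating_real_of_trivial (P : Type) (le : P -> P -> Prop) :
  (forall p q, le p q) -> ccc le /\ ~ adds_dominating_real le.
Proof.
move=> triv; apply: (@ccc_no_dominating_real_of_cover _ _ _ unit (fun=> setT)).
- by [].
- by move=> p; exists tt.
- by move=> _ p q _ _; exists p.
- by move=> _ qf _; exists (qf 0%N) => r _ j; exists j => //; exists r.
Qed.

Local Open Scope R_scope.

Definition metrizes (X : topologicalType) (d : X -> X -> R) : Prop :=
  (forall x y, 0 <= d x y) /\
  (forall x y, d x y = 0 <-> x = y) /\
  (forall x y, d x y = d y x) /\
  (forall x y z, d x z <= d x y + d y z) /\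
  (forall A : set X,
      open A <-> (forall x, A x -> exists e, 0 < e /\
                   (forall y, d x y < e -> A y))).

Section Metric.
Variables (X : topologicalType) (d : X -> X -> R).
Hypothesis dP : metrizes d.

Lemma dxx x : d x x = 0.
Proof. by case: dP => _ [h _]; apply/h. Qed.

Lemma dC x y : d x y = d y x.
Proof. by case: dP => _ [_ [h _]]. Qed.

Lemma d_gt0 x y : x <> y -> 0 < d x y.
Proof.
case: dP => d_ge0 [d_eq0 _] xy.
by case: (Rle_lt_or_eq_dec _ _ (d_ge0 x y)) => // /esym /d_eq0.
Qed.

Lemma d_triangle x y z : d x z <= d x y + d y z.
Proof. by case: dP => _ [_ [_ [h _]]]. Qed.

Lemma d_triangle_l x y z : d y z <= d x y + d x z.
Proof. by rewrite (dC x y); apply: d_triangle. Qed.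

Lemma open_metricP (U : set X) :
  open U <-> forall x, U x -> exists e, 0 < e /\ forall y, d x y < e -> U y.
Proof. by case: dP => _ [_ [_ [_ h]]]. Qed.

Lemma open_ball c r : open [set y | d c y < r].
Proof.
apply/open_metricP => y /= cy; exists (r - d c y); split; first lra.
by move=> z yz; have := d_triangle c y z; lra.
Qed.

Lemma nbhs_ball x (S : set X) :
  nbhs x S -> exists e, 0 < e /\ forall y, d x y < e -> S y.
Proof.
rewrite nbhsE => -[B [/open_metricP oB Bx] BS].
by have [e [e0 eB]] := oB x Bx; exists e; split=> // y /eB /BS.
Qed.

Lemma ball_nbhs x e : 0 < e -> nbhs x [set y | d x y < e].
Proof.
by move=> e0; apply: open_nbhs_nbhs; split; [apply: open_ball|rewrite /= dxx].
Qed.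

Lemma open_nbhs_ball (U : set X) x :
  open U -> U x -> exists e, 0 < e /\ forall y, d x y < e -> U y.
Proof. by move=> oU Ux; apply: nbhs_ball; apply: open_nbhs_nbhs. Qed.

Lemma closed_graph_ball_free (G : X -> X -> Prop) x y :
  closed_graph G -> ~ G x y -> x <> y ->
  exists e, 0 < e /\ forall u v, d x u < e -> d y v < e -> ~ G u v.
Proof.
move=> [_ [C [cC GC]]] nGxy xy.
have edgeE u v : G u v <-> C (u, v) /\ u <> v.
  by have /(congr1 (fun S => S (u, v))) := GC => /= ->.
have : nbhs (x, y) (~` C).
  by apply: open_nbhs_nbhs; split; [rewrite openC|move=> Cxy; apply/nGxy/edgeE].
move=> [[Sx Sy] /= [/nbhs_ball[ex [ex0 exS]] /nbhs_ball[ey [ey0 eyS]]] SC].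
exists (Rmin ex ey); split; first exact: Rmin_glb_lt.
move=> u v xu yv /edgeE[Cuv _]; apply: (SC (u, v)) => //=; split.
- by apply: exS; have := Rmin_l ex ey; lra.
- by apply: eyS; have := Rmin_r ex ey; lra.
Qed.

Lemma loose_ball (G : X -> X -> Prop) (A : set X) x :
  loose G A -> exists e, 0 < e /\ forall a, d x a < e -> A a -> ~ G x a.
Proof.
move=> /(_ x) [U [oU [Ux UA]]]; have [e [e0 eU]] := open_nbhs_ball oU Ux.
by exists e; split=> // a /eU; apply: UA.
Qed.

Lemma compact_finite_net r : compact [set: X] -> 0 < r ->
  exists s : seq X, forall x, exists c, c \in s /\ d c x < r.
Proof.
move=> cX r0; apply: contrapT => no_net.
pose far (s : seq X) := [set y | forall c, c \in s -> ~ d c y < r].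
have farF : ProperFilter (filter_from [set: seq X] far).
  apply: filter_from_proper; last first.
    move=> s _; apply: contrapT => s_net; apply: no_net; exists s => x.
    apply: contrapT => nx; apply: s_net.
    by exists x => c cs cx; apply: nx; exists c.
  apply: filter_from_filter; first by exists [::].
  move=> s t _ _; exists (s ++ t) => // y fy.
  by split=> c cst; apply: fy; rewrite mem_cat cst ?orbT.
have [p [_ clp]] := cX _ farF filterT.
have farp : filter_from [set: seq X] far (far [:: p]) by exists [:: p].
have [y [fy py]] := clp _ _ farp (ball_nbhs p r0).
by apply: (fy p); rewrite ?mem_seq1.
Qed.

Lemma compact_ultra_limit (I : Type) (U : set_system I) (u : I -> X) :
  compact [set: X] -> UltraFilter U ->
  exists x, forall e, 0 < e -> U [set k | d x (u k) < e].
Proof.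
move=> cX UU.
have [x [_ clx]] := cX _ (fmap_proper_filter u ultra_proper) filterT.
exists x => e e0.
have [//|Ufar] := in_ultra_setVsetC [set k | d x (u k) < e] UU.
by have [y []] := clx (~` [set y | d x y < e]) _ Ufar (ball_nbhs x e0).
Qed.

End Metric.

Definition rad (m : nat) : R := Rinv (INR m.+1).

Lemma rad_gt0 m : 0 < rad m.
Proof. by apply/Rinv_0_lt_compat/lt_0_INR/ssrnat.ltP. Qed.

Lemma rad_small e : 0 < e -> exists m, 3 * rad m < e.
Proof.
move=> e0; have [N [Ne N0]] := Rtrigo_def.archimed_cor1 (e / 3) ltac:(lra).
by exists N.-1; rewrite /rad prednK; [lra|apply/ssrnat.ltP].
Qed.

Lemma common_radius_seq (T : eqType) (s : seq T) (P : T -> R -> Prop) :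
  (forall t e e', 0 < e' -> e' <= e -> P t e -> P t e') ->
  (forall t, t \in s -> exists e, 0 < e /\ P t e) ->
  exists e, 0 < e /\ forall t, t \in s -> P t e.
Proof.
move=> shrink; elim: s => [|a s IHs] sP; first by exists R1; split; [lra|].
have [ea [ea0 Pa]] := sP a (mem_head _ _).
have [es [es0 Ps]] : exists e, 0 < e /\ forall t, t \in s -> P t e.
  by apply: IHs => t ts; apply: sP; rewrite in_cons ts orbT.
exists (Rmin ea es); split; first exact: Rmin_glb_lt.
move=> t; rewrite in_cons => /predU1P[->|ts].
- by apply: shrink Pa; [apply: Rmin_glb_lt|apply: Rmin_l].
- by apply: shrink (Ps t ts); [apply: Rmin_glb_lt|apply: Rmin_r].
Qed.

Lemma filter_forall_finite (T : Type) (I : choiceType) (F : set_system T)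
    {FF : Filter F} (D : set I) (P : I -> set T) :
  finite_set D -> (forall i, D i -> F (P i)) ->
  F [set k | forall i, D i -> P i k].
Proof.
move=> /finite_fsetP[D' ->] DP.
by apply: filterS (filter_bigI FF DP) => k kP i Di; apply: kP.
Qed.

Section Conditions.
Variables (X : topologicalType) (G : X -> X -> Prop).

Lemma PG_le_refl (p : PG_cond G) : PG_le p p.
Proof. by split. Qed.

Lemma PG_le_of_empty (p q : PG_cond G) : (X -> False) -> PG_le p q.
Proof. by move=> noX; split=> x; case: (noX x). Qed.

Lemma PG_compatible (p q : PG_cond G) :
  (forall x y, G x y -> G y x) ->
  a_ p `<=` o_ q -> a_ q `<=` o_ p ->
  (forall x y, a_ p x -> a_ q y -> ~ G x y) -> compatible (@PG_le X G) p q.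
Proof.
move=> Gsym pq qp cross.
have fin : finite_set (a_ p `|` a_ q).
  by rewrite finite_setU; split; apply: a_finite.
have anti : anticlique G (a_ p `|` a_ q).
  move=> x y [xp|xq] [yp|yq] xy.
  - exact: (a_anticlique (p := p)).
  - exact: cross.
  - by move=> /Gsym; apply: cross.
  - exact: (a_anticlique (p := q)).
have op : open (o_ p `&` o_ q) by apply: openI; apply: o_open.
have sub : a_ p `|` a_ q `<=` o_ p `&` o_ q.
  by move=> x [xp|xq]; split; [apply: a_sub_o|apply: pq|apply: qp|apply: a_sub_o].
by exists (PGCond fin anti op sub); split; split=> x //=; [left|case|right|case].
Qed.

End Conditions.

Section Codes.
Variables (X : topologicalType) (d : X -> X -> R) (G : X -> X -> Prop).
Variables (A : nat -> set X) (net : nat -> seq X) (x0 : X).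
Hypotheses (dP : metrizes d) (G_closed : closed_graph G).
Hypothesis A_loose : forall n, loose G (A n).

Lemma G_sym x y : G x y -> G y x.
Proof. by case: G_closed => -[Gs _] _; apply: Gs. Qed.

(* An entry [(n, (m, j))] stands for the loose set [A n] and the ball of
   radius [rad m] around the [j]-th point of [net m]. *)
Definition entry := (nat * (nat * nat))%type.
Definition center (e : entry) : X := nth x0 (net e.2.1) e.2.2.
Definition radius (e : entry) : R := rad e.2.1.

Lemma radius_gt0 e : 0 < radius e.
Proof. exact: rad_gt0. Qed.

Definition fits (p : PG_cond G) (e : entry) (x : X) : Prop :=
  [/\ A e.1 x, d (center e) x < radius e,
      forall y, d (center e) y < 2 * radius e -> o_ p y &
      forall y, d (center e) y <= radius e -> A e.1 y -> ~ G x y].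

Definition separated (e e' : entry) : Prop :=
  forall u v, d (center e) u <= radius e -> d (center e') v <= radius e' ->
  ~ G u v.

Definition coded (c : seq entry) (p : PG_cond G) : Prop :=
  (forall e e', e \in c -> e' \in c -> e <> e' -> separated e e') /\
  exists pt : entry -> X,
    a_ p = pt @` [set` c] /\ forall e, e \in c -> fits p e (pt e).

Lemma coded_sub_open c p q : coded c p -> coded c q -> a_ p `<=` o_ q.
Proof.
move=> [_ [pt [-> fp]]] [_ [pt' [_ fq]]] _ [e ce <-].
have [_ de _ _] := fp e ce; have [_ _ oq _] := fq e ce.
by apply: oq; have := radius_gt0 e; lra.
Qed.

Lemma coded_centered c : centered (@PG_le X G) (coded c).
Proof.
move=> p q pc qc.
apply: PG_compatible G_sym (coded_sub_open pc qc) (coded_sub_open qc pc) _.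
move: pc qc => [_ [pt [-> fp]]] [sep [pt' [-> fq]]] _ _ [e ce <-] [e' ce' <-].
have [_ dx _ free] := fp e ce; have [Ay dy _ _] := fq e' ce'.
have [ee'|/eqP ee'] := eqVneq e e'.
  by subst e'; apply: free (Rlt_le _ _ dy) Ay.
exact: sep (Rlt_le _ _ dx) (Rlt_le _ _ dy).
Qed.

Section Limit.
Variables (c : seq entry) (qf : nat -> PG_cond G) (pts : nat -> entry -> X).
Variables (U : set_system nat) (limpt : entry -> X).
Context {U_proper : ProperFilter U}.
Hypothesis c_sep :
  forall e e', e \in c -> e' \in c -> e <> e' -> separated e e'.
Hypothesis qf_pts : forall k, a_ (qf k) = pts k @` [set` c].
Hypothesis pts_fit : forall k e, e \in c -> fits (qf k) e (pts k e).
Hypothesis pts_lim : forall e r, 0 < r -> U [set k | d (limpt e) (pts k e) < r].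

Lemma limpt_in_cball e : e \in c -> d (center e) (limpt e) <= radius e.
Proof.
move=> ce; apply: Rnot_lt_le => far.
have gap : 0 < d (center e) (limpt e) - radius e by lra.
have [k /= lk] := filter_ex (pts_lim e gap); have [_ dk _ _] := pts_fit k ce.
have := d_triangle dP (center e) (pts k e) (limpt e).
by rewrite (dC dP (pts k e)); lra.
Qed.

Definition limit_a : set X := limpt @` [set` c].
Definition limit_o : set X :=
  \bigcup_(e in [set` c]) [set y | d (center e) y < 2 * radius e].

Lemma limit_a_finite : finite_set limit_a.
Proof. exact: finite_image. Qed.

Lemma limit_a_anticlique : anticlique G limit_a.
Proof.
move=> _ _ [e ce <-] [e' ce' <-] ll'.
apply: (c_sep ce ce') (limpt_in_cball ce) (limpt_in_cball ce') => ee'.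
by apply: ll'; rewrite ee'.
Qed.

Lemma limit_o_open : open limit_o.
Proof. by apply: bigcup_open => e _; apply: open_ball. Qed.

Lemma limit_a_sub_o : limit_a `<=` limit_o.
Proof.
move=> _ [e ce <-]; exists e => //=.
by have := limpt_in_cball ce; have := radius_gt0 e; lra.
Qed.

Definition limit_cond : PG_cond G :=
  PGCond limit_a_finite limit_a_anticlique limit_o_open limit_a_sub_o.

Lemma pts_near_open e (O : set X) :
  open O -> O (limpt e) -> U [set k | O (pts k e)].
Proof.
move=> oO Ol; have [r [r0 rO]] := open_nbhs_ball dP oO Ol.
by apply: filterS (pts_lim e r0) => k /rO.
Qed.

Lemma pts_near_nonadjacent r e y : PG_le r limit_cond -> e \in c -> a_ r y ->
  U [set k | ~ G y (pts k e)].
Proof.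
move=> [ra _] ce ry; have rl : a_ r (limpt e) by apply: ra; exists e.
have [->|yl] := pselect (y = limpt e).
  have [s [s0 sfree]] := loose_ball dP (limpt e) (A_loose e.1).
  apply: filterS (pts_lim e s0) => k ks; apply: sfree ks _.
  by have [] := pts_fit k ce.
have nG : ~ G y (limpt e) by apply: (a_anticlique (p := r)).
have [s [s0 sfree]] := closed_graph_ball_free dP G_closed nG yl.
by apply: filterS (pts_lim e s0) => k; apply: sfree; rewrite dxx.
Qed.

Lemma limit_cond_compatible r : PG_le r limit_cond ->
  U [set k | compatible (@PG_le X G) r (qf k)].
Proof.
move=> rl.
have near_o : U [set k | forall e, [set` c] e -> o_ r (pts k e)].
  apply: filter_forall_finite (finite_seq c) _ => e ce.
  by apply: pts_near_open (o_open r) _; apply/a_sub_o/rl.1; exists e.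
have near_free :
    U [set k | forall e, [set` c] e -> forall y, a_ r y -> ~ G y (pts k e)].
  apply: filter_forall_finite (finite_seq c) _ => e ce.
  by apply: filter_forall_finite (a_finite r) _ => y; apply: pts_near_nonadjacent.
apply: filterS (filterI near_o near_free) => k [ko kfree].
apply: PG_compatible G_sym _ _ _.
- move=> y /a_sub_o /rl.2 [e ce ey].
  by have [_ _ ok _] := pts_fit k ce; apply: ok.
- by rewrite qf_pts => _ [e ce <-]; apply: ko.
- by move=> y z ry; rewrite qf_pts => -[e ce <-]; apply: kfree.
Qed.

End Limit.

Lemma coded_has_limits c :
  compact [set: X] -> has_limits (@PG_le X G) (coded c).
Proof.
move=> cX qf qc.
have /choice[pts ptsP] := fun k => (qc k).2.
have [U [UU evU]] := ultraFilterLemma eventually_filter.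
have /choice[limpt limptP] := fun e => compact_ultra_limit dP (pts^~ e) cX UU.
exists (limit_cond (qc O).1 (fun k => (ptsP k).2) limptP) => r rl j.
have jU : U [set k | (j <= k)%N] by apply: evU; exists j.
have kU := limit_cond_compatible (fun k => (ptsP k).1) rl.
by have [k [jk kr]] := filter_ex (filterI jU kU); exists k.
Qed.

Definition safe_radius (p : PG_cond G) (n : nat) (x : X) (e : R) : Prop :=
  [/\ forall y, d x y < e -> o_ p y,
      forall y, d x y < e -> A n y -> ~ G x y &
      forall x', a_ p x' -> x' <> x ->
        e <= d x x' /\ forall u v, d x u < e -> d x' v < e -> ~ G u v].

Lemma safe_radiusW p n x e e' :
  0 < e' -> e' <= e -> safe_radius p n x e -> safe_radius p n x e'.
Proof.
move=> e'0 e'e [xo xfree xsep]; split=> [y xy|y xy|x' px' x'x].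
- by apply: xo; lra.
- by apply: xfree; lra.
- have [xx' sep] := xsep x' px' x'x; split; first lra.
  by move=> u v xu x'v; apply: sep; lra.
Qed.

Lemma safe_radius_exists p n x :
  a_ p x -> exists e, 0 < e /\ safe_radius p n x e.
Proof.
move=> px; have [e1 [e10 e1o]] := open_nbhs_ball dP (o_open p) (a_sub_o px).
have [e2 [e20 e2free]] := loose_ball dP x (A_loose n).
have [s ps] := (finite_seqP (a_ p)).1 (a_finite p).
have [e3 [e30 e3sep]] : exists e, 0 < e /\ forall x', x' \in s -> x' <> x ->
    e <= d x x' /\ forall u v, d x u < e -> d x' v < e -> ~ G u v.
  apply: common_radius_seq => [x' e e' e'0 e'e sep x'x|x' sx'].
    have [xx' sep'] := sep x'x; split; first lra.
    by move=> u v xu x'v; apply: sep'; lra.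
  have [->|x'x] := pselect (x' = x); first by exists 1; split=> //; lra.
  have nG : ~ G x x' by apply: (a_anticlique px _ (nesym x'x)); rewrite ps.
  have [e [e0 efree]] := closed_graph_ball_free dP G_closed nG (nesym x'x).
  exists (Rmin e (d x x')); split.
    by apply: Rmin_glb_lt; last apply: d_gt0 (nesym x'x).
  move=> _; split=> [|u v xu x'v]; first exact: Rmin_r.
  by apply: efree; have := Rmin_l e (d x x'); lra.
exists (Rmin e1 (Rmin e2 e3)); split.
  by apply: Rmin_glb_lt => //; apply: Rmin_glb_lt.
move: (Rmin_l e1 (Rmin e2 e3)) (Rmin_r e1 (Rmin e2 e3)) => min1 min23.
move: (Rmin_l e2 e3) (Rmin_r e2 e3) => min2 min3.
split=> [y xy|y xy|x' px' x'x]; [apply: e1o|apply: e2free|]; try lra.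
have [xx' sep] :
    e3 <= d x x' /\ forall u v, d x u < e3 -> d x' v < e3 -> ~ G u v.
  by apply: (e3sep x') x'x; move: px'; rewrite ps.
split; first lra.
by move=> u v xu x'v; apply: sep; lra.
Qed.

Lemma common_safe_radius p (n : X -> nat) :
  exists e, 0 < e /\ forall x, a_ p x -> safe_radius p (n x) x e.
Proof.
have [s ps] := (finite_seqP (a_ p)).1 (a_finite p).
have [e [e0 se]] :
    exists e, 0 < e /\ forall x, x \in s -> safe_radius p (n x) x e.
  apply: common_radius_seq => [x e e' e'0 e'e|x sx]; first exact: safe_radiusW.
  by apply: safe_radius_exists; rewrite ps.
by exists e; split=> // x; rewrite ps; apply: se.
Qed.

Section Construction.
Variables (p : PG_cond G) (n : X -> nat) (e : R) (m : nat) (cf : X -> X).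
Hypothesis n_cover : forall x, A (n x) x.
Hypothesis safe : forall x, a_ p x -> safe_radius p (n x) x e.
Hypothesis me : 3 * rad m < e.
Hypothesis cf_net : forall x, cf x \in net m /\ d (cf x) x < rad m.

Definition entry_of (x : X) : entry := (n x, (m, index (cf x) (net m))).

Lemma center_entry_of x : center (entry_of x) = cf x.
Proof. by rewrite /center nth_index //; case: (cf_net x). Qed.

Lemma entry_of_fits x : a_ p x -> fits p (entry_of x) x.
Proof.
move=> px; have [xo xfree _] := safe px; have [_ cx] := cf_net x.
have := rad_gt0 m; rewrite /fits center_entry_of /radius /= => r0.
split=> // y cy; [apply: xo|apply: xfree];
  by have := d_triangle_l dP (cf x) x y; lra.
Qed.

Lemma entry_of_separated x x' : a_ p x -> a_ p x' ->
  entry_of x <> entry_of x' -> separated (entry_of x) (entry_of x').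
Proof.
move=> px px' xx' u v; rewrite !center_entry_of /radius /= => xu x'v.
have x'x : x' <> x by move=> x'E; apply: xx'; rewrite x'E.
have [_ _ /(_ x' px' x'x) [_ sep]] := safe px.
have [[_ cx] [_ cx']] := (cf_net x, cf_net x').
have r0 := rad_gt0 m.
apply: sep; first by have := d_triangle_l dP (cf x) x u; lra.
by have := d_triangle_l dP (cf x') x' v; lra.
Qed.

Lemma entry_of_inj x x' :
  a_ p x -> a_ p x' -> entry_of x = entry_of x' -> x = x'.
Proof.
move=> px px' same; apply: contrapT => xx'.
have [_ _ /(_ x' px' (nesym xx')) [ex _]] := safe px.
have cfE : cf x' = cf x by rewrite -!center_entry_of same.
have := d_triangle_l dP (cf x) x x'; rewrite -{2}cfE.
by have := (cf_net x).2; have := (cf_net x').2; have := rad_gt0 m; lra.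
Qed.

Lemma coded_entries s : a_ p = [set` s] -> coded (map entry_of s) p.
Proof.
move=> ps; have inj : {in s &, injective entry_of}.
  by move=> x x' sx sx'; apply: entry_of_inj; rewrite ps.
split=> [_ _ /mapP[x sx ->] /mapP[x' sx' ->]|].
  by apply: entry_of_separated; rewrite ps.
exists (fun e => nth x0 s (index e (map entry_of s))); split.
  rewrite ps; apply/seteqP; split=> [x sx|_ [_ /mapP[x sx ->] <-]] /=.
    by exists (entry_of x); [apply: map_f|rewrite nth_index_map].
  by rewrite nth_index_map.
move=> _ /mapP[x sx ->]; rewrite nth_index_map //.
by apply: entry_of_fits; rewrite ps.
Qed.

End Construction.

Lemma code_exists p :
  (forall x, exists n, A n x) ->
  (forall m x, exists c, c \in net m /\ d c x < rad m) ->
  exists c, coded c p.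
Proof.
move=> /choice[n n_cover] net_dense.
have [e [e0 safe]] := common_safe_radius p n.
have [m me] := rad_small e0.
have /choice[cf cf_net] := net_dense m.
have [s ps] := (finite_seqP (a_ p)).1 (a_finite p).
by eexists; exact: (coded_entries n_cover safe me cf_net ps).
Qed.

End Codes.

Theorem corollary3p9 (X : topologicalType) (G : X -> X -> Prop) :
  compact [set: X] -> metrizable X -> closed_graph G ->
  (exists A : nat -> set X, (forall n, loose G (A n)) /\
                            [set: X] = \bigcup_n A n) ->
  ccc (@PG_le X G) /\ ~ adds_dominating_real (@PG_le X G).
Proof.
move=> cX [d dP] G_closed [A [A_loose A_union]].
(* Centers of balls need a default point [x0]; without points P_G is trivial. *)
have [[x0 _]|noX] := pselect (exists x : X, True); last first.
  apply: ccc_no_dominating_real_of_trivial => p q.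
  by apply: PG_le_of_empty => x; apply: noX; exists x.
have A_cover x : exists n, A n x.
  by have : [set: X] x by []; rewrite A_union => -[n _ Anx]; exists n.
have /choice[net net_dense] m := compact_finite_net dP cX (rad_gt0 m).
apply: (@ccc_no_dominating_real_of_cover _ _ _ _ (coded d A net x0)).
- exact: PG_le_refl.
- by move=> p; apply: code_exists.
- exact: coded_centered.
- by move=> c; apply: coded_has_limits.
Qed.
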